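(* Let $S=\{(x_1,x_2)\in\mathbb{R}^2:x_1\ge0,\ x_1^2-x_2^3\ge0\}$ and $G=\{X_1,X_1^2-X_2^3\}$. Then for every integer $k\ge1$, $\mathrm{TH}_k(G)=\overline{\Omega_k(G)}=\{(x_1,x_2)\in\mathbb{R}^2:x_1\ge0\}$ (for $k\ge2$ in the case of $\Omega_k$), whereas $\mathrm{conv}(S)=S\neq\{x_1\ge0\}$; hence neither hierarchy converges to $\overline{\mathrm{conv}(S)}$.
   Context: For a finite set $H=\{h_1,\dots,h_r\}\subseteq\mathbb{R}[X_1,X_2]$, $\mathcal{Q}_k(H)=\{\sum_{j=0}^r\sigma_jh_j:h_0=1,\ \sigma_j\text{ sums of squares},\ \deg(\sigma_jh_j)\le2k\}$. $\mathrm{TH}_k(G)=\{x:p(x)\ge0\ \forall p\in\mathcal{Q}_k(G)\text{ of degree}\le1\}$. For $y=(y_\alpha)_{\alpha\in\mathbb{N}^2,|\alpha|\le2k}$, $L_y(\sum q_\alpha X^\alpha)=\sum q_\alpha y_\alpha$, $M_k(y)=(y_{\alpha+\beta})_{|\alpha|,|\beta|\le k}$, and for $p=\sum_\beta p_\beta X^\beta$ with $d_p=\lceil\deg p/2\rceil$, $M_{k-d_p}(py)=(\sum_\beta p_\beta y_{\alpha+\gamma+\beta})_{|\alpha|,|\gamma|\le k-d_p}$. $\Omega_k(G)=\{x:\exists y,\ L_y(1)=1,\ L_y(X_i)=x_i,\ M_k(y)\succeq0,\ M_{k-1}(X_1y)\succeq0,\ M_{k-2}((X_1^2-X_2^3)y)\succeq0\}$.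 *)

(* Bivariate real polynomials are represented as
   {poly {poly R}}: the inner variable is X1, the outer variable is X2. *)
From HB Require Import structures.
From mathcomp Require Import all_boot all_order all_algebra.
Set Implicit Arguments. Unset Strict Implicit. Unset Printing Implicit Defensive.
Import Order.TTheory GRing.Theory Num.Theory.
Local Open Scope ring_scope.

Section Defs.
Variable R : rcfType.

Definition bipoly := {poly {poly R}}.

Definition X1 : bipoly := ('X)%:P.
Definition X2 : bipoly := 'X.

Definition coef2 (p : bipoly) (a b : nat) : R := (p`_b)`_a.

Definition deg_le (p : bipoly) (d : nat) : Prop :=
  forall a b : nat, (d < a + b)%N -> coef2 p a b = 0.

Definition eval2 (p : bipoly) (x : R * R) : R := (p.[x.2%:P]).[x.1].

Definition sos (s : bipoly) : Prop :=
  exists qs : seq bipoly, s = \sum_(q <- qs) q ^+ 2.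

Definition inQk (k : nat) (H : seq bipoly) (p : bipoly) : Prop :=
  exists (s0 : bipoly) (ss : seq bipoly),
    size ss = size H /\
    sos s0 /\ deg_le s0 (2 * k) /\
    (forall i, (i < size H)%N -> sos ss`_i /\ deg_le (ss`_i * H`_i) (2 * k)) /\
    p = s0 + \sum_(i < size H) ss`_i * H`_i.

Definition TH (k : nat) (H : seq bipoly) (x : R * R) : Prop :=
  forall p : bipoly, inQk k H p -> deg_le p 1 -> 0 <= eval2 p x.

Definition g2 : bipoly := X1 ^+ 2 - X2 ^+ 3.
Definition G : seq bipoly := [:: X1; g2].

(* moment sequences: y a b stands for y_(a,b); only entries with a + b <= 2k
   are ever used below *)
Definition mseq := nat -> nat -> R.

Definition Lsh (y : mseq) (p : bipoly) (s : nat * nat) : R :=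
  \sum_(b < size p) \sum_(a < size p`_b) (p`_b)`_a * y (a + s.1)%N (b + s.2)%N.

Definition Ly (y : mseq) (p : bipoly) : R := Lsh y p (0%N, 0%N).

Definition mons (d : nat) : seq (nat * nat) :=
  [seq ab <- [seq (a, b) | a <- iota 0 d.+1, b <- iota 0 d.+1] | (ab.1 + ab.2 <= d)%N].

Definition mon (d : nat) (i : nat) : nat * nat := nth (0%N, 0%N) (mons d) i.

Definition addm (u v : nat * nat) : nat * nat := ((u.1 + v.1)%N, (u.2 + v.2)%N).

Definition momMx (d : nat) (y : mseq) : 'M[R]_(size (mons d)) :=
  \matrix_(i, j) (let s := addm (mon d i) (mon d j) in y s.1 s.2).

Definition locMx (d : nat) (p : bipoly) (y : mseq) : 'M[R]_(size (mons d)) :=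
  \matrix_(i, j) Lsh y p (addm (mon d i) (mon d j)).

Definition psd (n : nat) (M : 'M[R]_n) : Prop :=
  forall v : 'cV[R]_n, 0 <= (v^T *m M *m v) 0 0.

Definition Omega (k : nat) (x : R * R) : Prop :=
  exists y : mseq,
    Ly y 1 = 1 /\ Ly y X1 = x.1 /\ Ly y X2 = x.2 /\
    psd (momMx k y) /\ psd (locMx (k - 1) X1 y) /\ psd (locMx (k - 2) g2 y).

Definition cl2 (A : R * R -> Prop) (x : R * R) : Prop :=
  forall e : R, 0 < e ->
    exists z, A z /\ `|z.1 - x.1| < e /\ `|z.2 - x.2| < e.

Definition conv2 (A : R * R -> Prop) (x : R * R) : Prop :=
  exists (n : nat) (pts : 'I_n -> R * R) (lam : 'I_n -> R),
    (forall i, A (pts i)) /\ (forall i, 0 <= lam i) /\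
    \sum_(i < n) lam i = 1 /\
    x = (\sum_(i < n) lam i * (pts i).1, \sum_(i < n) lam i * (pts i).2).

Definition Sset (x : R * R) : Prop := 0 <= x.1 /\ 0 <= x.1 ^+ 2 - x.2 ^+ 3.
Definition halfplane (x : R * R) : Prop := 0 <= x.1.

End Defs.

(* - Convexity: S is the intersection of H with the half-planes
     3 t x2 <= t^3 + 2 x1 (t > 0) cut out by the tangents to the cusp, so
     conv(S) = S.
   - TH_k: X1 lies in Q_k(G), giving TH_k(G) <= H.  Conversely, restricting a
     degree one element s0 + s1 X1 + s2 g2 of Q_k(G) to the line X1 = 0 gives
     s0(0,X2) - s2(0,X2) X2^3; restrictions of sums of squares vanish or have
     even degree and positive leading coefficient, so s2(0,X2) = 0 and the
     element has no X2 term.  It is then nonnegative on H.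
   - Omega_k: the corner entry of M_(k-1)(X1 y) is x1, so Omega_k(G) <= H.
     A point (s, t) of H is approximated by the means of atomic measures with
     a heavy atom at (s, t) and light atoms at (s + jA, t), j = 1..k-1, where
     g2 is large; Lagrange interpolation shows that the localizing matrix of
     g2 is then positive semidefinite.
   - Finally (0, 1) lies in H but at distance >= 1/4 from S. *)
From HB Require Import structures.
From mathcomp Require Import all_boot all_order all_algebra.
From mathcomp Require Import ring lra.
Set Implicit Arguments. Unset Strict Implicit. Unset Printing Implicit Defensive.
Import Order.TTheory GRing.Theory Num.Theory.
Local Open Scope ring_scope.

Section Theorem16.
Variable R : rcfType.
Implicit Types (p q : bipoly R) (x : R * R).

Lemma eval2D p q x : eval2 (p + q) x = eval2 p x + eval2 q x.
Proof. by rewrite /eval2 !hornerD. Qed.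

Lemma eval2B p q x : eval2 (p - q) x = eval2 p x - eval2 q x.
Proof. by rewrite /eval2 !hornerD !hornerN. Qed.

Lemma eval2M p q x : eval2 (p * q) x = eval2 p x * eval2 q x.
Proof. by rewrite /eval2 !hornerM. Qed.

Lemma eval2X p n x : eval2 (p ^+ n) x = eval2 p x ^+ n.
Proof. by rewrite /eval2 !horner_exp. Qed.

Lemma eval2_sum (I : Type) (r : seq I) (F : I -> bipoly R) x :
  eval2 (\sum_(i <- r) F i) x = \sum_(i <- r) eval2 (F i) x.
Proof. by rewrite /eval2 !horner_sum. Qed.

Lemma eval2_1 x : eval2 1 x = 1.
Proof. by rewrite /eval2 !hornerC. Qed.

Lemma eval2_X1 x : eval2 (X1 R) x = x.1.
Proof. by rewrite /eval2 /X1 hornerC hornerX. Qed.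

Lemma eval2_X2 x : eval2 (X2 R) x = x.2.
Proof. by rewrite /eval2 /X2 hornerX hornerC. Qed.

Lemma eval2_g2 x : eval2 (g2 R) x = x.1 ^+ 2 - x.2 ^+ 3.
Proof. by rewrite /g2 eval2B !eval2X eval2_X1 eval2_X2. Qed.

Lemma eval2_expand p x :
  eval2 p x = \sum_(b < size p) \sum_(a < size p`_b) (p`_b)`_a * (x.1 ^+ a * x.2 ^+ b).
Proof.
rewrite /eval2 (horner_coef p) horner_sum; apply: eq_bigr => b _.
rewrite hornerM horner_exp hornerC (horner_coef p`_b) mulr_suml.
by apply: eq_bigr => a _; rewrite mulrA.
Qed.

Lemma sos_ge0 s x : sos s -> 0 <= eval2 s x.
Proof.
case=> qs ->; rewrite eval2_sum; apply: sumr_ge0 => q _.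
by rewrite eval2X sqr_ge0.
Qed.

Lemma deg_le_size p d :
  deg_le p d -> (size p <= d.+1)%N /\ forall b : nat, (size (p`_b)%R <= d.+1)%N.
Proof.
move=> hp; split => [|b]; apply/leq_sizeP => j hj.
  by apply/polyP => a; rewrite coef0; apply: hp; apply: leq_trans hj (leq_addl _ _).
by apply: hp; apply: leq_trans hj (leq_addr _ _).
Qed.

Lemma eval2_deg1 p x : deg_le p 1 ->
  eval2 p x = coef2 p 0 0 + coef2 p 1 0 * x.1 + coef2 p 0 1 * x.2.
Proof.
move=> hp; have [s1 s2] := deg_le_size hp.
rewrite /eval2 (horner_coef_wide _ s1) !big_ord_recr big_ord0 /= add0r hornerD !hornerM.
rewrite !hornerC (horner_coef_wide _ (s2 0%N)) (horner_coef_wide _ (s2 1%N)).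
rewrite !big_ord_recr !big_ord0 /= !add0r.
have -> : (p`_1)`_1 = 0 by apply: hp.
rewrite /coef2 /=; lra.
Qed.

(* S is the intersection of the half-plane x1 >= 0 with the half-planes
   3 t x2 <= t^3 + 2 x1 (t > 0) bounded by the tangents to the cusp
   x1 = x2^(3/2); the tangency point t = sqrt x2 gives the converse. *)
Lemma Sset_tangentE x : Sset x <->
  0 <= x.1 /\ forall t : R, 0 < t -> 3 * t * x.2 <= t ^+ 3 + 2 * x.1.
Proof.
case: x => a b /=; rewrite /Sset /=.
have [b0|b0] := lerP b 0.
  have b2 : 0 <= b ^+ 2 by rewrite sqr_ge0.
  split=> -[a0 H]; split=> //.
    move=> t t0; have : 0 <= t ^+ 3 by rewrite exprn_ge0 // ltW.
    nra.
  by rewrite exprS; nra.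
pose s := Num.sqrt b.
have s0 : 0 < s by rewrite sqrtr_gt0.
have ss : s ^+ 2 = b by rewrite sqr_sqrtr // ltW.
have s3 : 0 <= s ^+ 3 by rewrite exprn_ge0 // ltW.
have e : b ^+ 3 = (s ^+ 3) ^+ 2 by rewrite -ss -!exprM mulnC.
split=> -[a0 H]; split=> //.
  move=> t t0.
  have has : s ^+ 3 <= a by rewrite leNgt; apply/negP => ?; move: H; rewrite e; nra.
  have : 0 <= (t - s) ^+ 2 * (t + 2 * s) by rewrite mulr_ge0 ?sqr_ge0 //; lra.
  by rewrite -ss; nra.
have h := H s s0; rewrite -ss in h.
have h2 : s ^+ 3 <= a by nra.
by rewrite e; nra.
Qed.

Lemma conv2_Sset x : conv2 (@Sset R) x <-> Sset x.
Proof.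
split=> [|hx]; last first.
  exists 1%N, (fun=> x), (fun=> 1); split=> //; split=> [_|]; first exact: ler01.
  by rewrite !big_ord1 !mul1r; case: x {hx}.
case=> n [pts [lam [hS [hl [hs ->]]]]]; apply/Sset_tangentE => /=.
have hT i := (Sset_tangentE (pts i)).1 (hS i).
split=> [|t t0].
  by apply: sumr_ge0 => i _; apply: mulr_ge0 => //; exact: (hT i).1.
rewrite -subr_ge0.
have <- : \sum_(i < n) lam i * (t ^+ 3 + 2 * (pts i).1 - 3 * t * (pts i).2) =
   t ^+ 3 + 2 * (\sum_(i < n) lam i * (pts i).1) - 3 * t * (\sum_(i < n) lam i * (pts i).2).
  rewrite (eq_bigr (fun i => t ^+ 3 * lam i + 2 * (lam i * (pts i).1)
                             - 3 * t * (lam i * (pts i).2))); last by move=> i _; ring.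
  by rewrite sumrB big_split /= -!mulr_sumr hs mulr1.
apply: sumr_ge0 => i _; apply: mulr_ge0 => //.
by rewrite subr_ge0; apply: (hT i).2.
Qed.

(* Univariate polynomials that are zero or of even degree with positive
   leading coefficient; they contain all sums of squares and are closed
   under addition, since leading terms of equal degree cannot cancel. *)
Definition pos_even (A : {poly R}) : Prop :=
  A = 0 \/ (odd (size A) /\ 0 < lead_coef A).

Lemma pos_even_sqr (q : {poly R}) : pos_even (q ^+ 2).
Proof.
have [->|q0] := eqVneq q 0; first by left; rewrite expr0n.
right; rewrite expr2 size_mul // lead_coefM; split.
  have : (0 < size q)%N by rewrite size_poly_gt0.
  by case: (size q) => // n _; rewrite addSn addnS /= oddD addbb.
by rewrite -expr2 lt_def sqr_ge0 andbT sqrf_eq0 lead_coef_eq0.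
Qed.

Lemma pos_evenD A B : pos_even A -> pos_even B -> pos_even (A + B).
Proof.
case=> [->|[oA lA]]; first by rewrite add0r.
case=> [->|[oB lB]]; first by rewrite addr0; right.
right; have [AB|BA|e] := ltngtP (size B) (size A).
- by rewrite size_polyDl // lead_coefDl.
- by rewrite addrC size_polyDl // lead_coefDl.
have sA : (0 < size A)%N by case: (size A) oA.
have c : (A + B)`_(size A).-1 = lead_coef A + lead_coef B.
  by rewrite coefD /lead_coef e.
have hs : size (A + B) = size A.
  apply/eqP; rewrite eqn_leq; apply/andP; split.
    by apply: leq_trans (size_polyD _ _) _; rewrite -e maxnn.
  rewrite leqNgt; apply/negP => lt.
  have : (A + B)`_(size A).-1 = 0 by apply: nth_default; rewrite -ltnS prednK.
  by apply/eqP; rewrite c lt0r_neq0 // addr_gt0.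
by rewrite hs; split => //; rewrite /lead_coef hs c addr_gt0.
Qed.

Lemma pos_even_sos (qs : seq {poly R}) : pos_even (\sum_(q <- qs) q ^+ 2).
Proof.
elim: qs => [|q qs IH]; first by rewrite big_nil; left.
by rewrite big_cons; apply: pos_evenD => //; apply: pos_even_sqr.
Qed.

(* If A and B are of this kind and n is odd, then A - B X^n has degree
   at least n unless B = 0: the two terms have sizes of different parity. *)
Lemma pos_even_sub_odd A B n : odd n -> pos_even A -> pos_even B ->
  (size (A - B * 'X^n)%R <= n)%N -> B = 0.
Proof.
move=> on hA [//|[oB lB]] hs; exfalso.
have B0 : B != 0 by rewrite -lead_coef_eq0 lt0r_neq0.
have sB : size (B * 'X^n) = (n + size B)%N by rewrite size_mulXn // addnC.
have ltn : (n < size (B * 'X^n)%R)%N by rewrite sB -addn1 leq_add2l size_poly_gt0.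
move: hs; apply/negP; rewrite -ltnNge.
case: hA => [->|[oA _]]; first by rewrite sub0r size_polyN.
have [h|h|h] := ltngtP (size (B * 'X^n)) (size A).
- by rewrite size_polyDl ?size_polyN //; apply: ltn_trans h.
- by rewrite addrC size_polyDl ?size_polyN.
- by move: oA; rewrite -h sB oddD on oB.
Qed.

Definition restrict0 : bipoly R -> {poly R} := map_poly (horner_eval (0 : R)).

Lemma restrict0_coef p j : (restrict0 p)`_j = coef2 p 0 j.
Proof. by rewrite /restrict0 coef_map /= horner_evalE horner_coef0. Qed.

Lemma restrict0_sos s : sos s -> pos_even (restrict0 s).
Proof.
case=> qs ->.
suff -> : restrict0 (\sum_(q <- qs) q ^+ 2) = \sum_(q <- map restrict0 qs) q ^+ 2.
  exact: pos_even_sos.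
rewrite big_map /restrict0 rmorph_sum; apply: eq_bigr => q _; exact: rmorphXn.
Qed.

(* On the line X1 = 0 it restricts to
   s0(0,X2) - s2(0,X2) X2^3, and the parity argument above forces
   s2(0,X2) = 0, leaving the restriction of a sum of squares of degree <= 1,
   which is constant. *)
Lemma Q_deg1_noX2 p s0 s1 s2 : deg_le p 1 -> sos s0 -> sos s2 ->
  p = s0 + (s1 * X1 R + s2 * g2 R) -> coef2 p 0 1 = 0.
Proof.
move=> hp h0 h2 ep.
have sp : (size (restrict0 p) <= 2)%N.
  by apply/leq_sizeP => j hj; rewrite restrict0_coef hp.
have ep0 : restrict0 p = restrict0 s0 - restrict0 s2 * 'X^3.
  rewrite ep /restrict0 !rmorphD !rmorphM /= /X1 /g2 /X2 rmorphB /= !rmorphXn /=.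
  rewrite map_polyC map_polyX /= horner_evalE hornerX polyC0 mulr0 expr0n /=.
  by rewrite sub0r mulrN add0r.
have A := restrict0_sos h0; have B := restrict0_sos h2.
have B0 : restrict0 s2 = 0.
  by apply: (pos_even_sub_odd (n := 3) isT A B); rewrite -ep0; apply: leq_trans sp _.
move: sp; rewrite -restrict0_coef ep0 B0 mul0r subr0.
case: A => [->|[oA _] sA]; first by rewrite coef0.
by apply: nth_default; case: (size _) oA sA => [|[|[|n]]].
Qed.

Lemma coef2_X1 a b : coef2 (X1 R) a b = ((a == 1%N) && (b == 0%N))%:R.
Proof.
rewrite /coef2 /X1 coefC; case: b => [|b] /=; last by rewrite coef0 andbF.
by rewrite coefX andbT.
Qed.

Lemma X1_in_Qk k : (1 <= k)%N -> inQk k (G R) (X1 R).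
Proof.
move=> k1; exists 0, [:: 1; 0]; split=> //; split; first by exists [::]; rewrite big_nil.
split; first by move=> a b _; rewrite /coef2 !coef0.
split; last by rewrite /= big_ord_recr big_ord1 /= mul1r mul0r addr0 add0r.
case=> [|[|i]] // _; split.
- by exists [:: 1]; rewrite big_seq1 expr1n.
- move=> a b hab; rewrite mul1r coef2_X1 /=.
  case: eqP => // ea; case: eqP => // eb; subst; move: hab; rewrite addn0.
  by case: k k1.
- by exists [::]; rewrite big_nil.
- by move=> a b _; rewrite mul0r /coef2 !coef0.
Qed.

Lemma deg_le_X1 : deg_le (X1 R) 1.
Proof.
move=> a b hab; rewrite coef2_X1; case: eqP => // ea; case: eqP => // eb.
by subst; move: hab.
Qed.

Lemma TH_halfplane k : (1 <= k)%N -> forall x, TH k (G R) x <-> halfplane x.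
Proof.
move=> k1 x; split => [H|hx p].
  by rewrite /halfplane -(eval2_X1 x); apply: H; [apply: X1_in_Qk | apply: deg_le_X1].
move=> [s0 [ss [_ [h0 [_ [hi ep]]]]]] hp.
rewrite /= big_ord_recr big_ord1 /= in ep.
have [[h1 _] [h2 _]] := (hi 0%N isT, hi 1%N isT).
have c01 : coef2 p 0 1 = 0 by apply: (Q_deg1_noX2 hp h0 h2 ep).
have -> : eval2 p x = eval2 p (x.1, 0) by rewrite !eval2_deg1 //= c01 !mul0r.
rewrite ep !eval2D !eval2M eval2_X1 eval2_g2 /= expr0n /= subr0.
by rewrite !addr_ge0 ?mulr_ge0 ?sqr_ge0 ?sos_ge0.
Qed.

(* For weights lam and
   atoms pt, the moment sequence y_ab = sum_w lam_w pt_w^(a,b) turns the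
   quadratic forms of M_d(p y) into sums sum_w lam_w p(pt_w) v(pt_w)^2. *)

Definition mono (x : R * R) (s : nat * nat) : R := x.1 ^+ s.1 * x.2 ^+ s.2.

Lemma mono_add x s t : mono x (addm s t) = mono x s * mono x t.
Proof. by rewrite /mono /addm /= !exprD; ring. Qed.

Definition mom M (lam : 'I_M -> R) (pt : 'I_M -> R * R) : mseq R :=
  fun a b => \sum_w lam w * mono (pt w) (a, b).

Lemma Lsh_mom M lam pt p s :
  Lsh (@mom M lam pt) p s = \sum_w lam w * eval2 p (pt w) * mono (pt w) s.
Proof.
rewrite /Lsh /mom.
under eq_bigr => b _ do under eq_bigr => a _ do rewrite mulr_sumr.
under eq_bigr => b _ do rewrite exchange_big /=.
rewrite exchange_big /=; apply: eq_bigr => w _.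
rewrite eval2_expand mulr_sumr mulr_suml; apply: eq_bigr => b _.
rewrite mulr_sumr mulr_suml; apply: eq_bigr => a _.
by rewrite /mono !exprD; ring.
Qed.

Lemma Ly_mom M lam pt p : Ly (@mom M lam pt) p = \sum_w lam w * eval2 p (pt w).
Proof. by rewrite /Ly Lsh_mom; apply: eq_bigr => w _; rewrite /mono /= !expr0 !mulr1. Qed.

Lemma momMx_locMx1 d (y : mseq R) : momMx d y = locMx d 1 y.
Proof.
apply/matrixP => i j; rewrite !mxE /Lsh size_poly1 big_ord1 polyseq1 /=.
by rewrite size_poly1 big_ord1 coefC mul1r !add0n.
Qed.

Lemma quadE n (M : 'M[R]_n) (v : 'cV[R]_n) :
  (v^T *m M *m v) 0 0 = \sum_i \sum_j v i 0 * M i j * v j 0.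
Proof.
rewrite mxE (eq_bigr (fun j => \sum_i v i 0 * M i j * v j 0)); last first.
  by move=> j _; rewrite mxE mulr_suml; apply: eq_bigr => i _; rewrite mxE.
by rewrite exchange_big.
Qed.

Definition vpoly d (v : 'cV[R]_(size (mons d))) x : R :=
  \sum_i v i 0 * mono x (mon d i).

Lemma quad_locMx_mom d p M lam pt (v : 'cV[R]_(size (mons d))) :
  (v^T *m locMx d p (@mom M lam pt) *m v) 0 0
  = \sum_w lam w * eval2 p (pt w) * vpoly v (pt w) ^+ 2.
Proof.
rewrite quadE.
under eq_bigr => i _ do under eq_bigr => j _ do rewrite mxE Lsh_mom mulr_sumr mulr_suml.
under eq_bigr => i _ do rewrite exchange_big /=.
rewrite exchange_big /=; apply: eq_bigr => w _.
rewrite /vpoly expr2 mulr_suml mulr_sumr; apply: eq_bigr => i _.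
rewrite mulr_sumr mulr_sumr; apply: eq_bigr => j _.
by rewrite mono_add; ring.
Qed.

Lemma psd_locMx_mom d p M lam pt :
  (forall w, 0 <= lam w * eval2 p (pt w)) -> psd (locMx d p (@mom M lam pt)).
Proof.
move=> H v; rewrite quad_locMx_mom; apply: sumr_ge0 => w _.
by rewrite mulr_ge0 ?sqr_ge0.
Qed.

Lemma Omega_mom k M (lam : 'I_M -> R) (pt : 'I_M -> R * R) :
  (forall w, 0 <= lam w) -> \sum_w lam w = 1 -> (forall w, 0 <= (pt w).1) ->
  psd (locMx (k - 2) (g2 R) (mom lam pt)) ->
  Omega k (\sum_w lam w * (pt w).1, \sum_w lam w * (pt w).2).
Proof.
move=> lam0 lam1 pt0 Hg; exists (mom lam pt); rewrite !Ly_mom.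
under eq_bigr do rewrite eval2_1 mulr1.
under [X in _ /\ X = _ /\ _]eq_bigr do rewrite eval2_X1.
under [X in _ /\ _ /\ X = _ /\ _]eq_bigr do rewrite eval2_X2.
do 3!split=> //; rewrite momMx_locMx1; split; [|split=> //]; apply: psd_locMx_mom => w.
  by rewrite eval2_1 mulr1.
by rewrite eval2_X1 mulr_ge0.
Qed.

Lemma psd_diag n (M : 'M[R]_n) i : psd M -> 0 <= M i i.
Proof.
move=> /(_ (\col_j (j == i)%:R)); rewrite quadE.
rewrite (bigD1 i) //= [X in _ + X]big1 => [|j ji]; last first.
  by rewrite big1 // => l _; rewrite !mxE (negPf ji) mul0r mul0r.
rewrite addr0 (bigD1 i) //= [X in _ + X]big1 => [|j ji]; last by rewrite !mxE (negPf ji) mulr0.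
by rewrite !mxE eqxx mul1r mulr1 addr0.
Qed.

(* Omega_k lies in x1 >= 0: the (0,0) entry of M_(k-1)(X1 y) is L_y(X1) = x1. *)
Lemma Omega_halfplane k x : Omega k x -> halfplane x.
Proof.
rewrite /halfplane; case=> y [_ [<- [_ [_ [H _]]]]].
have i0 : (0 < size (mons (k - 1)))%N by [].
by have := psd_diag (Ordinal i0) H; rewrite mxE.
Qed.

Lemma vpoly_line d (v : 'cV[R]_(size (mons d))) (t : R) :
  exists P : {poly R}, (size P <= d.+1)%N /\ forall z, vpoly v (z, t) = P.[z].
Proof.
exists (\sum_i (v i 0 * t ^+ (mon d i).2) *: 'X^((mon d i).1)); split => [|z].
  apply/leq_sizeP => j hj; rewrite coef_sum big1 // => i _.
  rewrite coefZ coefXn; case: eqP => [ej|]; last by rewrite mulr0.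
  have : ((mon d i).1 + (mon d i).2 <= d)%N.
    have : mon d i \in mons d by rewrite /mon mem_nth.
    by rewrite /mons mem_filter => /andP [].
  by rewrite -ej => /(leq_trans (leq_addr _ _)); rewrite leqNgt hj.
rewrite /vpoly horner_sum; apply: eq_bigr => i _.
by rewrite hornerZ horner_exp hornerX /mono /=; ring.
Qed.

Lemma cauchy_schwarz n (a b : 'I_n -> R) :
  (\sum_i a i * b i) ^+ 2 <= (\sum_i a i ^+ 2) * (\sum_i b i ^+ 2).
Proof.
have e1 : (\sum_i a i ^+ 2) * (\sum_i b i ^+ 2) = \sum_i \sum_j a i ^+ 2 * b j ^+ 2.
  by rewrite mulr_suml; apply: eq_bigr => i _; rewrite mulr_sumr.
have e2 : (\sum_i a i ^+ 2) * (\sum_i b i ^+ 2) = \sum_i \sum_j a j ^+ 2 * b i ^+ 2.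
  rewrite mulrC mulr_suml; apply: eq_bigr => i _; rewrite mulr_sumr.
  by apply: eq_bigr => j _; rewrite mulrC.
have e3 : (\sum_i a i * b i) ^+ 2 = \sum_i \sum_j (a i * b i) * (a j * b j).
  by rewrite expr2 mulr_suml; apply: eq_bigr => i _; rewrite mulr_sumr.
(* Lagrange's identity *)
have E : \sum_i \sum_j (a i * b j - a j * b i) ^+ 2 =
   (\sum_i \sum_j a i ^+ 2 * b j ^+ 2) + (\sum_i \sum_j a j ^+ 2 * b i ^+ 2)
   - 2 * \sum_i \sum_j (a i * b i) * (a j * b j).
  rewrite mulr_sumr -big_split -sumrB; apply: eq_bigr => i _.
  by rewrite mulr_sumr -big_split -sumrB; apply: eq_bigr => j _ /=; ring.
have : 0 <= \sum_i \sum_j (a i * b j - a j * b i) ^+ 2.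
  by apply: sumr_ge0 => i _; apply: sumr_ge0 => j _; apply: sqr_ge0.
by rewrite -subr_ge0; lra.
Qed.

(* Lagrange interpolation at the nodes s + A, ..., s + N A bounds the value at
   s of any polynomial of degree < N, uniformly in s and A: after the change
   of variable X |-> s + A X the value at 0 is a fixed linear combination of
   the values at 1, ..., N. *)
Lemma lagrange_bound N : (0 < N)%N -> exists L : R, 0 <= L /\
  forall P : {poly R}, (size P <= N)%N -> forall s A : R,
    P.[s] ^+ 2 <= L * \sum_(j < N) P.[s + A * (j.+1)%:R] ^+ 2.
Proof.
move=> N0; pose xn (j : nat) : R := (j.+1)%:R.
have xinj : injective xn by move=> i j /eqP; rewrite /xn eqr_nat => /eqP [].
pose l (i : 'I_N) := (tnth (N.-lagrange xn) i).[0].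
exists (\sum_i l i ^+ 2); split; first by apply: sumr_ge0 => i _; apply: sqr_ge0.
move=> P sP s A; pose q : {poly R} := A%:P * 'X + s%:P.
have qE z : q.[z] = s + A * z by rewrite /q hornerD hornerM hornerC hornerX hornerC addrC.
have sQ : (size (P \Po q) <= N)%N.
  apply: leq_trans (size_comp_poly_leq _ _) _.
  have sq : ((size q).-1 <= 1)%N.
    have : (size q <= 2)%N.
      apply/leq_sizeP => j hj; rewrite /q coefD coefCM coefX coefC.
      by case: j hj => [|[|j]] //; rewrite mulr0 addr0.
    by case: (size q) => [|[|[|]]].
  case: (size P) sP => [|m] hm /=; first by rewrite mul0n.
  by apply: leq_trans hm; rewrite ltnS; apply: leq_trans (leq_mul (leqnn m) sq) _; rewrite muln1.
have e0 : P.[s] = \sum_(i < N) (P \Po q).[xn i] * l i.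
  have -> : P.[s] = (P \Po q).[0] by rewrite horner_comp qE mulr0 addr0.
  rewrite {1}(lagrange_gen N0 xinj sQ) horner_sum.
  by apply: eq_bigr => i _; rewrite hornerM hornerC.
rewrite e0 mulrC; apply: le_trans (cauchy_schwarz _ _) _.
by under eq_bigr do rewrite horner_comp qE.
Qed.

(* The approximating measures: weight l0 at (s, t) and weight l1 at each of
   the points (s + j A, t), j = 1, ..., d + 1, far to the right, where
   g2 = x1^2 - x2^3 is large. *)
Definition spread_weights d (l0 l1 : R) (w : 'I_d.+2) : R :=
  if (w : nat) == 0%N then l0 else l1.

Definition spread_points d (s t A : R) (w : 'I_d.+2) : R * R :=
  (s + A * (w : nat)%:R, t).

(* The localizing matrix of g2 is positive semidefinite as soon as the mass
   l1 on the far points dominates, through the interpolation bound, the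
   possibly negative contribution of the atom (s, t). *)
Lemma psd_g2_spread d (s t A l0 l1 L : R) :
  0 <= s -> 0 <= A -> 0 <= l0 -> 0 <= l1 ->
  (forall P : {poly R}, (size P <= d.+1)%N ->
     P.[s] ^+ 2 <= L * \sum_(j < d.+1) P.[s + A * (j.+1)%:R] ^+ 2) ->
  l0 * (`|s ^+ 2 - t ^+ 3| * L) <= l1 * (A ^+ 2 - t ^+ 3) ->
  psd (locMx d (g2 R) (mom (@spread_weights d l0 l1) (@spread_points d s t A))).
Proof.
move=> s0 A0 l00 l10 HI Hc v; rewrite quad_locMx_mom.
have [P [sP PE]] := vpoly_line v t.
rewrite big_ord_recl /spread_weights /spread_points /= mulr0 addr0 eval2_g2 PE /=.
under eq_bigr => j _ do rewrite /bump leq0n add1n eval2_g2 PE /=.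
set SP := \sum_(j < d.+1) P.[s + A * (j.+1)%:R] ^+ 2.
have SP0 : 0 <= SP by apply: sumr_ge0 => j _; apply: sqr_ge0.
have far : l1 * (A ^+ 2 - t ^+ 3) * SP <=
    \sum_(j < d.+1) l1 * ((s + A * (j.+1)%:R) ^+ 2 - t ^+ 3) * P.[s + A * (j.+1)%:R] ^+ 2.
  rewrite /SP mulr_sumr; apply: ler_sum => j _; rewrite ler_wpM2r ?sqr_ge0 //.
  rewrite ler_wpM2l // lerD2r.
  have j1 : 1 <= (j.+1)%:R :> R by rewrite ler1n.
  have : A <= s + A * (j.+1)%:R by nra.
  nra.
have near : - (l0 * `|s ^+ 2 - t ^+ 3|) * (L * SP) <= l0 * (s ^+ 2 - t ^+ 3) * P.[s] ^+ 2.
  have g0 : 0 <= l0 * `|s ^+ 2 - t ^+ 3| by rewrite mulr_ge0.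
  apply: (@le_trans _ _ (- (l0 * `|s ^+ 2 - t ^+ 3|) * P.[s] ^+ 2)).
    by rewrite !mulNr lerN2 ler_wpM2l // HI.
  rewrite ler_wpM2r ?sqr_ge0 // -mulrN ler_wpM2l // lerNl -normrN; exact: ler_norm.
have : l0 * (`|s ^+ 2 - t ^+ 3| * L) * SP <= l1 * (A ^+ 2 - t ^+ 3) * SP.
  by rewrite ler_wpM2r.
nra.
Qed.

Lemma spread_weights_sum d (r : R) : 0 <= r ->
  \sum_w @spread_weights d (1 + (d.+1)%:R * r)^-1 (r * (1 + (d.+1)%:R * r)^-1) w = 1.
Proof.
move=> r0; rewrite big_ord_recl /spread_weights /= sumr_const card_ord -[X in _ + X]mulr_natl.
have D0 : 1 + (d.+1)%:R * r != 0 by rewrite lt0r_neq0 // ltr_wpDr ?mulr_ge0.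
by field; rewrite nat1r.
Qed.

Lemma spread_weights_moment d (l0 l1 : R) : 0 <= l1 ->
  \sum_w @spread_weights d l0 l1 w * (w : nat)%:R <= l1 * (d.+2 * d.+1)%:R.
Proof.
move=> l10; have -> : l1 * (d.+2 * d.+1)%:R = \sum_(w < d.+2) l1 * (d.+1)%:R.
  by rewrite sumr_const card_ord -mulr_natr natrM; ring.
apply: ler_sum => w _; rewrite /spread_weights.
case: eqP => [->|_]; first by rewrite mulr0n mulr0 mulr_ge0.
by rewrite ler_wpM2l // ler_nat -ltnS.
Qed.

Lemma spread_mean d (lam : 'I_d.+2 -> R) (s t A : R) : \sum_w lam w = 1 ->
  (\sum_w lam w * (spread_points s t A w).1 = s + A * \sum_w lam w * (w : nat)%:R) /\
  \sum_w lam w * (spread_points s t A w).2 = t.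
Proof.
move=> lam1; rewrite /spread_points /= -mulr_suml lam1 mul1r; split=> //.
rewrite (eq_bigr (fun w => s * lam w + A * (lam w * (w : nat)%:R))); last first.
  by move=> w _; ring.
by rewrite big_split /= -mulr_sumr -mulr_sumr lam1 mulr1.
Qed.

(* Choice of the spacing A and of the mass ratio r = l1 / l0: the far atoms
   must compensate a negativity c while their total displacement of the mean,
   at most r A K, stays below e.  Both hold for A large and r = 2 (c+1) / A^2. *)
Lemma spread_parameters (c K t e : R) : 0 <= c -> 0 <= K -> 0 < e ->
  exists A r : R, [/\ 0 < A, 0 <= r, c <= r * (A ^+ 2 - t ^+ 3) & r * A * K < e].
Proof.
move=> c0 K0 e0; pose A := 2 * (c + 1) * K / e + 2 * t ^+ 2 + 2.
have BKe : 0 <= 2 * (c + 1) * K / e.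
  by rewrite divr_ge0 ?(ltW e0) // mulr_ge0 // mulr_ge0 //; lra.
have t2 : 0 <= t ^+ 2 by apply: sqr_ge0.
have A0 : 0 < A by rewrite /A; lra.
have At : 2 * t ^+ 3 <= A ^+ 2.
  have h := sqr_ge0 (t ^+ 2 - t).
  have h2 : 2 * t ^+ 2 + 2 <= A by rewrite /A; lra.
  have h3 : (2 * t ^+ 2 + 2) ^+ 2 <= A ^+ 2 by rewrite !expr2 ler_pM //; lra.
  nra.
exists A, (2 * (c + 1) / A ^+ 2).
have rA : 2 * (c + 1) / A ^+ 2 * A ^+ 2 = 2 * (c + 1).
  by rewrite divfK // expf_neq0 // lt0r_neq0.
have r0 : 0 <= 2 * (c + 1) / A ^+ 2 by rewrite divr_ge0 ?sqr_ge0 //; lra.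
split=> //; first nra.
have eA : e * A = 2 * (c + 1) * K + e * (2 * t ^+ 2 + 2).
  by rewrite /A; field; exact: lt0r_neq0.
have : 0 < e * (2 * t ^+ 2 + 2) by rewrite mulr_gt0 //; lra.
nra.
Qed.

Lemma Omega_approx d (s t e : R) : 0 <= s -> 0 < e ->
  exists z, Omega d.+2 z /\ `|z.1 - s| < e /\ `|z.2 - t| < e.
Proof.
move=> s0 e0; have [L [L0 HI]] := lagrange_bound (ltn0Sn d).
have c0 : 0 <= `|s ^+ 2 - t ^+ 3| * L by rewrite mulr_ge0.
have [A [r [A0 r0 Hc HK]]] :=
  spread_parameters t c0 (ler0n _ (d.+2 * d.+1)) e0.
pose l0 := (1 + (d.+1)%:R * r)^-1; pose l1 := r * l0.
have l00 : 0 <= l0 by rewrite invr_ge0 addr_ge0 ?mulr_ge0.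
have l10 : 0 <= l1 by rewrite mulr_ge0.
have l01 : l0 <= 1 by rewrite invf_le1 ?lerDl ?mulr_ge0 // ltr_wpDr ?mulr_ge0.
have l1r : l1 <= r by rewrite /l1 ler_piMr.
have lam0 w : 0 <= @spread_weights d l0 l1 w by rewrite /spread_weights; case: ifP.
have lam1 : \sum_w @spread_weights d l0 l1 w = 1 by apply: spread_weights_sum.
have [m1 m2] := spread_mean s t A lam1.
have M0 : 0 <= \sum_w @spread_weights d l0 l1 w * (w : nat)%:R.
  by apply: sumr_ge0 => w _; rewrite mulr_ge0.
have MK := spread_weights_moment d l0 l10.
exists (\sum_w @spread_weights d l0 l1 w * (spread_points s t A w).1,
        \sum_w @spread_weights d l0 l1 w * (spread_points s t A w).2); split.
  apply: Omega_mom => //; first by move=> w; rewrite addr_ge0 // mulr_ge0 // ltW.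
  rewrite !subSS subn0; apply: (psd_g2_spread (L := L)) => //; [exact: ltW | |].
  - by move=> P sP; apply: HI.
  - have -> : l1 * (A ^+ 2 - t ^+ 3) = l0 * (r * (A ^+ 2 - t ^+ 3)) by rewrite /l1; ring.
    by rewrite ler_wpM2l.
rewrite /= m1 m2 addrC addKr subrr normr0 ger0_norm ?mulr_ge0 ?(ltW A0) //.
split=> //; apply: le_lt_trans HK.
rewrite [r * A]mulrC -mulrA ler_wpM2l ?(ltW A0) //.
by apply: le_trans MK _; rewrite ler_wpM2r.
Qed.

Lemma clOmega_halfplane k : (2 <= k)%N -> forall x, cl2 (@Omega R k) x <-> halfplane x.
Proof.
move=> k2 x; split=> [H|hx e e0].
  rewrite /halfplane; case: (lerP 0 x.1) => // hneg; exfalso.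
  have [z [Oz [h1 _]]] := H (- x.1) ltac:(by rewrite oppr_gt0).
  have := Omega_halfplane Oz; move: h1; rewrite ltr_norml => /andP [h1 h2].
  rewrite /halfplane; lra.
by case: k k2 => [|[|d]] // _; apply: Omega_approx.
Qed.

Lemma Sset_far (z : R * R) : Sset z -> `|z.1 - 0| < 1 / 4 -> `|z.2 - 1| < 1 / 4 -> False.
Proof.
case=> h0 hg; rewrite !ltr_norml => /andP [a1 a2] /andP [b1 b2].
have h3 : (3 / 4) ^+ 3 < z.2 ^+ 3 by rewrite ltrXn2r //; lra.
have h4 : z.1 ^+ 2 < (1 / 4) ^+ 2 by rewrite ltrXn2r //; lra.
move: h3 h4; rewrite !expr2 !exprS expr0 !mulr1; lra.
Qed.

Lemma notin_cl_conv2S : ~ cl2 (conv2 (@Sset R)) (0, 1).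
Proof.
move=> /(_ (1 / 4)) [|z [/conv2_Sset Sz [h1 h2]]]; first by rewrite divr_gt0 // ltr0n.
exact: Sset_far Sz h1 h2.
Qed.

End Theorem16.

Unset Implicit Arguments.

Theorem mainTheorem16 (R : rcfType) :
  (forall k : nat, (1 <= k)%N -> forall x : R * R, TH k (G R) x <-> halfplane x) /\
  (forall k : nat, (2 <= k)%N -> forall x : R * R, cl2 (@Omega R k) x <-> halfplane x) /\
  (forall x : R * R, conv2 (@Sset R) x <-> Sset x) /\
  ~ (forall x : R * R, Sset x <-> halfplane x) /\
  (forall k : nat, (1 <= k)%N ->
     ~ (forall x : R * R, TH k (G R) x <-> cl2 (conv2 (@Sset R)) x)) /\
  (forall k : nat, (2 <= k)%N ->
     ~ (forall x : R * R, cl2 (@Omega R k) x <-> cl2 (conv2 (@Sset R)) x)).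
Proof.
have h01 : halfplane ((0 : R), (1 : R)) by rewrite /halfplane.
split; first exact: TH_halfplane.
split; first exact: clOmega_halfplane.
split; first exact: conv2_Sset.
split.
  move=> /(_ (0, 1)) [_ /(_ h01) [_]] /=.
  by rewrite expr0n /= expr1n sub0r oppr_ge0 leNgt ltr01.
split=> k hk /(_ (0, 1)) [H _]; apply: notin_cl_conv2S; apply: H.
  exact/(TH_halfplane hk).
exact/(clOmega_halfplane hk).
Qed.
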